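(* Let $n\ge 2$ and let $S_1$ and $S_2$ be two disjoint sets of cells of an $n\times n$ array, each of which forms a Hamilton cycle. Then the cells of $S_1\cup S_2$ can be filled with the integers $1,2,\dots,4n$, each used exactly once, so that in every row and every column the sum of the filled entries equals $8n+2$.
   Context: Rows and columns of an $n\times n$ array are indexed by $\{1,\dots,n\}$. Cells are identified with edges of the complete bipartite graph $K_{n,n}$ with parts $\{a_1,\dots,a_n\}$ and $\{b_1,\dots,b_n\}$, cell $(i,j)$ corresponding to edge $\{a_i,b_j\}$. A set of cells forms a Hamilton cycle if the corresponding edge set is a single cycle of length $2n$ in $K_{n,n}$. (Thus each such set has exactly two cells in each row and in each column.) *)

From mathcomp Require Import all_boot.
Set Implicit Arguments. Unset Strict Implicit. Unset Printing Implicit Defensive.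

(* Vertices of K_{n,n}: inl i = a_i (row i), inr j = b_j (column j). *)
Definition vertex (n : nat) : finType := ('I_n + 'I_n)%type.

Definition is_row_vertex (n : nat) (v : vertex n) : bool :=
  if v is inl _ then true else false.

(* A cell (i,j) is the edge {a_i, b_j}. *)
Definition hamilton_cycle (n : nat) (S : {set 'I_n * 'I_n}) : Prop :=
  exists c : seq (vertex n),
    [/\ uniq c, size c = 2 * n,
        cycle (fun u v : vertex n => is_row_vertex u != is_row_vertex v) c &
        forall (i j : 'I_n),
          ((i, j) \in S) =
          ((next c (inl i) == inr j) || (next c (inr j) == inl i))].

From mathcomp Require Import all_boot zify.
Set Implicit Arguments. Unset Strict Implicit. Unset Printing Implicit Defensive.

(* Walk along each Hamilton cycle from a common row r and number its 2n cells 0, ..., 2n-1 in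
   order, so that cell k joins the vertices at positions k and k+1 (mod 2n), rows being at even
   positions.  Give the even cells of the first cycle the values 1, ..., n and its odd cells
   4n, ..., 3n+1; give the even cells of the second cycle 2n, ..., n+1 and its odd cells
   2n+1, ..., 3n.  The two cells of a cycle at a column then sum to 4n+1, and at a row to 4n+2 in
   the first cycle and 4n in the second, except at r, where the wrap-around cell 2n-1 gives 3n+2
   and 5n instead.  Either way every line sums to 8n+2. *)

Definition cnext (N k : nat) := if k.+1 == N then 0 else k.+1.
Definition cprev (N k : nat) := if k == 0 then N.-1 else k.-1.

Lemma cnext_cases N k : k.+1 = N /\ cnext N k = 0 \/ k.+1 <> N /\ cnext N k = k.+1.
Proof. by rewrite /cnext; case: eqP; [left | right]. Qed.

Lemma cprev_cases N k : k = 0 /\ cprev N k = N.-1 \/ k <> 0 /\ cprev N k = k.-1.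
Proof. by rewrite /cprev; case: eqP; [left | right]. Qed.

Section CyclicArith.
Variables (N k : nat).
Hypothesis lt_k : k < N.

Lemma cnext_lt : cnext N k < N.
Proof. by have := cnext_cases N k; lia. Qed.

Lemma cprev_lt : cprev N k < N.
Proof. by have := cprev_cases N k; lia. Qed.

Lemma eq_cnext l : l < N -> (k == cnext N l) = (l == cprev N k).
Proof.
by move=> lt_l; apply/eqP/eqP; have := cnext_cases N l; have := cprev_cases N k; lia.
Qed.

Lemma odd_cnext : ~~ odd N -> odd (cnext N k) = ~~ odd k.
Proof. by have := cnext_cases N k; lia. Qed.

Lemma odd_cprev : ~~ odd N -> odd (cprev N k) = ~~ odd k.
Proof. by have := cprev_cases N k; lia. Qed.

Lemma cnext_cprev_neq : 2 < N -> cnext N k != cprev N k.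
Proof.
by move=> ?; apply/negP => /eqP; have := cnext_cases N k; have := cprev_cases N k; lia.
Qed.

Lemma cnext2_neq : 2 < N -> cnext N (cnext N k) != k.
Proof.
move=> ?; apply/negP => /eqP.
by have := cnext_cases N k; have := cnext_cases N (cnext N k); lia.
Qed.

End CyclicArith.

Lemma index_next (T : eqType) (c : seq T) x : uniq c -> x \in c ->
  index (next c x) c = cnext (size c) (index x c).
Proof.
case: c => [//|y t] uc xc; rewrite next_nth xc.
have := index_mem x (y :: t); rewrite xc /cnext.
set i := index x _; set c := y :: t => lt_i.
have -> : nth y t i = nth y c i.+1 by [].
case: eqP => [e | ne]; last by rewrite index_uniq //; lia.
by rewrite nth_default ?e //= eqxx.
Qed.

Lemma nth_alternating_path (T : Type) (p : T -> bool) x s k :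
  path (fun u v => p u != p v) x s -> k <= size s ->
  p (nth x (x :: s) k) = p x (+) odd k.
Proof.
elim: s x k => [|y s IHs] x [|k] //=; rewrite ?addbF //.
case/andP=> pxy ps lt_k; rewrite (set_nth_default y) // IHs //; move: pxy.
by case: (p x); case: (p y); case: (odd k).
Qed.

Lemma big_pred2 (I : finType) (a b : I) (P : pred I) (F : I -> nat) :
  a != b -> P =1 pred2 a b -> \sum_(x | P x) F x = F a + F b.
Proof.
move=> ab Pab; rewrite (bigD1 a) ?Pab /= ?eqxx // (big_pred1 b) // => x.
by rewrite Pab /=; case: eqP => [-> | _]; rewrite ?eqxx ?(negPf ab) // andbT.
Qed.

Lemma sum_setU_disjoint (I T : finType) (A B : {set T}) (c : I -> T) (F G H : T -> nat) :
  [disjoint A & B] -> {in A, F =1 G} -> {in B, F =1 H} ->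
  \sum_(x | c x \in A :|: B) F (c x) =
  \sum_(x | c x \in A) G (c x) + \sum_(x | c x \in B) H (c x).
Proof.
move=> AB FG FH; rewrite (bigID (fun x => c x \in A)) /=; congr (_ + _).
- apply: eq_big => [x | x /andP[_ /FG] //].
  by rewrite in_setU; case: (c x \in A); rewrite ?andbT ?andbF.
- apply: eq_big => x; rewrite in_setU.
    by case cB: (c x \in B); rewrite ?(disjointFl AB cB) ?orbF ?andbN.
  by case cB: (c x \in B); rewrite ?(disjointFl AB cB) ?orbF ?andbN // => _; apply: FH.
Qed.

Record cycle_labeling n (S : {set 'I_n * 'I_n}) (s : vertex n -> nat) : Prop :=
  CycleLabeling {
    labeling_inj : injective s;
    labeling_lt : forall v, s v < 2 * n;
    labeling_odd : forall v, odd (s v) = ~~ is_row_vertex v;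
    labeling_cells : forall i j, ((i, j) \in S) =
      (s (inr j) == cnext (2 * n) (s (inl i))) || (s (inl i) == cnext (2 * n) (s (inr j)))
  }.

Lemma hamilton_cycle_labeling n (S : {set 'I_n * 'I_n}) (r : 'I_n) :
  hamilton_cycle S -> exists2 s, cycle_labeling S s & s (inl r) = 0.
Proof.
case=> c [uc size_c alt_c S_c].
have c_all v : v \in c.
  apply/negPn/negP => v_c; have/card_uniqP card_vc : uniq (v :: c) by rewrite /= v_c.
  by have := max_card (mem (v :: c)); rewrite card_vc /= size_c card_sum card_ord; lia.
case: (rot_to (c_all (inl r))) => k t rot_c.
have uc' : uniq (inl r :: t) by rewrite -rot_c rot_uniq.
have c'_all v : v \in inl r :: t by rewrite -rot_c mem_rot.
have size_c' : size (inl r :: t) = 2 * n by rewrite -rot_c size_rot.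
pose s v := index v (inl r :: t).
have s_inj : injective s.
  by move=> u v e; rewrite -(nth_index (inl r) (c'_all u)) [index _ _]e nth_index.
have s_lt v : s v < 2 * n by rewrite -size_c' index_mem.
have next_s u v : (next c u == v) = (s v == cnext (2 * n) (s u)).
  by rewrite -(next_rot k uc) rot_c -(inj_eq s_inj) /s index_next // size_c' eq_sym.
exists s; last by rewrite /s /= eqxx.
split=> // [v | i j]; last by rewrite S_c !next_s.
have := alt_c; rewrite -(rot_cycle k) rot_c /= rcons_path => /andP[path_t _].
have v_le : s v <= size t by rewrite -ltnS -[(size t).+1]/(size (inl r :: t)) index_mem.
have := nth_alternating_path path_t v_le; rewrite nth_index //= => ->.
by case: odd.
Qed.

Section Labeling.
Variables (n : nat) (S : {set 'I_n * 'I_n}) (s : vertex n -> nat).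
Hypothesis Ls : cycle_labeling S s.

Let s_lt := labeling_lt Ls.
Let even_row i : ~~ odd (s (inl i)). Proof. by rewrite (labeling_odd Ls). Qed.
Let odd_col j : odd (s (inr j)). Proof. by rewrite (labeling_odd Ls). Qed.
Let even_2n : ~~ odd (2 * n). Proof. by rewrite oddM. Qed.

Lemma labeling_row_eq i i' : (s (inl i) == s (inl i')) = (i == i').
Proof. by apply/eqP/eqP => [/(labeling_inj Ls) [] | ->]. Qed.

Lemma labeling_col_eq j j' : (s (inr j) == s (inr j')) = (j == j').
Proof. by apply/eqP/eqP => [/(labeling_inj Ls) [] | ->]. Qed.

Lemma labeling_onto k : k < 2 * n -> exists v, s v = k.
Proof.
move=> lt_k; have [|||_ im_s] := @uniq_min_size _ (map s (enum (vertex n))) (iota 0 (2 * n)).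
- by rewrite map_inj_uniq ?enum_uniq //; apply: labeling_inj Ls.
- by move=> _ /mapP[v _ ->]; rewrite mem_iota s_lt.
- by rewrite size_map -cardE card_sum card_ord size_iota addnn mul2n.
have /mapP[v _ ->] : k \in map s (enum (vertex n)) by rewrite im_s mem_iota.
by exists v.
Qed.

Lemma labeling_row k : k < 2 * n -> ~~ odd k -> exists i, s (inl i) = k.
Proof.
move=> /labeling_onto[[i | j] <-] ok; first by exists i.
by rewrite odd_col in ok.
Qed.

Lemma labeling_col k : k < 2 * n -> odd k -> exists j, s (inr j) = k.
Proof.
move=> /labeling_onto[[i | j] <-] ok; last by exists j.
by rewrite (negPf (even_row i)) in ok.
Qed.

Definition edge_index (x : 'I_n * 'I_n) : nat :=
  if s (inr x.2) == cnext (2 * n) (s (inl x.1)) then s (inl x.1) else s (inr x.2).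

Lemma edge_index_lt x : edge_index x < 2 * n.
Proof. by rewrite /edge_index; case: ifP. Qed.

Lemma edge_index_ends i j : (i, j) \in S ->
  let k := edge_index (i, j) in
  s (inl i) = (if odd k then cnext (2 * n) k else k) /\
  s (inr j) = (if odd k then k else cnext (2 * n) k).
Proof.
rewrite (labeling_cells Ls) /edge_index /=.
case: eqP => [-> _ | _ /= /eqP ->]; first by rewrite (negPf (even_row i)).
by rewrite odd_col.
Qed.

Lemma edge_index_inj : {in S &, injective edge_index}.
Proof.
move=> [i j] [i' j'] /edge_index_ends[ri cj] /edge_index_ends[ri' cj'] e.
move: ri cj; rewrite e -ri' -cj'.
by move=> /eqP; rewrite labeling_row_eq => /eqP-> /eqP; rewrite labeling_col_eq => /eqP->.
Qed.

Hypothesis n_ge2 : 2 <= n.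
Let n_gt2 : 2 < 2 * n. Proof. by lia. Qed.

Lemma edge_index_onto k : k < 2 * n -> exists2 x, x \in S & edge_index x = k.
Proof.
move=> lt_k; have lt_k' := cnext_lt lt_k.
have odd_k' : odd (cnext (2 * n) k) = ~~ odd k by rewrite odd_cnext.
case: (boolP (odd k)) => ok.
- have [j jk] := labeling_col lt_k ok.
  have [i ik] : exists i, s (inl i) = cnext (2 * n) k.
    by apply: labeling_row; rewrite ?odd_k' ?ok.
  exists (i, j); first by rewrite (labeling_cells Ls) ik jk eqxx orbT.
  by rewrite /edge_index /= ik jk eq_sym (negPf (cnext2_neq lt_k n_gt2)).
- have [i ik] := labeling_row lt_k ok.
  have [j jk] : exists j, s (inr j) = cnext (2 * n) k.
    by apply: labeling_col; rewrite ?odd_k'.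
  exists (i, j); first by rewrite (labeling_cells Ls) ik jk eqxx.
  by rewrite /edge_index /= ik jk eqxx.
Qed.

Lemma sum_row_edge_index (F : nat -> nat) i :
  \sum_(j | (i, j) \in S) F (edge_index (i, j)) =
  F (s (inl i)) + F (cprev (2 * n) (s (inl i))).
Proof.
set p := s (inl i); have lt_p : p < 2 * n := s_lt _.
have [j1 j1p] : exists j, s (inr j) = cnext (2 * n) p.
  by apply: labeling_col; rewrite ?cnext_lt ?odd_cnext ?even_row.
have [j2 j2p] : exists j, s (inr j) = cprev (2 * n) p.
  by apply: labeling_col; rewrite ?cprev_lt ?odd_cprev ?even_row.
have ne_p := cnext_cprev_neq lt_p n_gt2.
rewrite (@big_pred2 _ j1 j2) => [|| j].
- by rewrite /edge_index /= j1p j2p eqxx eq_sym (negPf ne_p).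
- by rewrite -labeling_col_eq j1p j2p.
by rewrite (labeling_cells Ls) -/p [X in _ || X]eq_cnext // -j1p -j2p !labeling_col_eq.
Qed.

Lemma sum_col_edge_index (F : nat -> nat) j :
  \sum_(i | (i, j) \in S) F (edge_index (i, j)) =
  F (s (inr j)) + F (cprev (2 * n) (s (inr j))).
Proof.
set q := s (inr j); have lt_q : q < 2 * n := s_lt _.
have [i1 i1q] : exists i, s (inl i) = cnext (2 * n) q.
  by apply: labeling_row; rewrite ?cnext_lt ?odd_cnext ?odd_col.
have [i2 i2q] : exists i, s (inl i) = cprev (2 * n) q.
  by apply: labeling_row; rewrite ?cprev_lt ?odd_cprev ?odd_col.
have ne_q := cnext_cprev_neq lt_q n_gt2.
rewrite (@big_pred2 _ i1 i2) => [|| i].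
- rewrite /edge_index /= i1q i2q -/q eq_sym (negPf (cnext2_neq lt_q n_gt2)).
  by rewrite eq_cnext ?eqxx ?cprev_lt.
- by rewrite -labeling_row_eq i1q i2q.
by rewrite (labeling_cells Ls) -/q eq_cnext ?s_lt // -i1q -i2q !labeling_row_eq orbC.
Qed.

End Labeling.

Definition cell_value (first : bool) (n k : nat) : nat :=
  if first then (if odd k then 4 * n - k %/ 2 else k %/ 2 + 1)
  else (if odd k then 2 * n + k %/ 2 + 1 else 2 * n - k %/ 2).

Section CellValues.
Variables (n k : nat).
Hypothesis lt_k : k < 2 * n.

Lemma cell_value_range b : 0 < cell_value b n k <= 4 * n.
Proof. by rewrite /cell_value; case: b; case: ifP; lia. Qed.

Lemma cell_value_inj b k' : k' < 2 * n -> cell_value b n k = cell_value b n k' -> k = k'.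
Proof. by rewrite /cell_value; case: b; case: ifP; case: ifP; lia. Qed.

Lemma cell_value_first_neq k' : k' < 2 * n -> cell_value true n k != cell_value false n k'.
Proof. by move=> ?; apply/negP => /eqP; rewrite /cell_value; case: ifP; case: ifP; lia. Qed.

Lemma sum_cell_value_col b : odd k ->
  cell_value b n k + cell_value b n (cprev (2 * n) k) = 4 * n + 1.
Proof.
move=> ok; have := cprev_cases (2 * n) k.
by rewrite /cell_value odd_cprev ?oddM // ok /=; case: b; lia.
Qed.

Lemma sum_cell_value_row k' : k' < 2 * n -> ~~ odd k -> ~~ odd k' -> (k == 0) = (k' == 0) ->
  cell_value true n k + cell_value true n (cprev (2 * n) k) +
  (cell_value false n k' + cell_value false n (cprev (2 * n) k')) = 8 * n + 2.
Proof.
move=> lt_k' ek ek' k0; have := cprev_cases (2 * n) k; have := cprev_cases (2 * n) k'.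
rewrite /cell_value !odd_cprev ?oddM // (negPf ek) (negPf ek') /=.
by move: k0; case: eqP; case: eqP; lia.
Qed.

End CellValues.

Lemma cell_value_onto n v : 0 < v <= 4 * n ->
  exists b, exists2 k, k < 2 * n & cell_value b n k = v.
Proof.
move=> v_range; rewrite /cell_value.
have [le_vn | lt_nv] := leqP v n.
  by exists true, (2 * (v - 1)); [lia | case: ifP; lia].
have [le_v2n | lt_2nv] := leqP v (2 * n).
  by exists false, (2 * (2 * n - v)); [lia | case: ifP; lia].
have [le_v3n | lt_3nv] := leqP v (3 * n).
  by exists false, (2 * (v - 2 * n - 1)).+1; [lia | case: ifP; lia].
by exists true, (2 * (4 * n - v)).+1; [lia | case: ifP; lia].
Qed.

Section Filling.
Variables (n : nat) (S1 S2 : {set 'I_n * 'I_n}) (s1 s2 : vertex n -> nat) (r : 'I_n).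
Hypotheses (n_ge2 : 2 <= n) (S12 : [disjoint S1 & S2]).
Hypotheses (L1 : cycle_labeling S1 s1) (L2 : cycle_labeling S2 s2).
Hypotheses (r1 : s1 (inl r) = 0) (r2 : s2 (inl r) = 0).

Let f1 x := cell_value true n (edge_index s1 x).
Let f2 x := cell_value false n (edge_index s2 x).

Definition filling (x : 'I_n * 'I_n) : nat := if x \in S1 then f1 x else f2 x.

Let filling_S1 : {in S1, filling =1 f1}.
Proof. by move=> x x1; rewrite /filling x1. Qed.
Let filling_S2 : {in S2, filling =1 f2}.
Proof. by move=> x x2; rewrite /filling (disjointFl S12 x2). Qed.
Let lt1 x : edge_index s1 x < 2 * n := edge_index_lt L1 x.
Let lt2 x : edge_index s2 x < 2 * n := edge_index_lt L2 x.

Lemma filling_inj : {in S1 :|: S2 &, injective filling}.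
Proof.
move=> x y; rewrite /filling !in_setU.
case: (boolP (x \in S1)) => x1; case: (boolP (y \in S1)) => y1 /= x2 y2 e.
- exact: (edge_index_inj L1) (cell_value_inj (lt1 x) (lt1 y) e).
- by have /eqP/(_ e) := cell_value_first_neq (lt1 x) (lt2 y).
- by have /eqP/(_ (esym e)) := cell_value_first_neq (lt1 y) (lt2 x).
- exact: (edge_index_inj L2) (cell_value_inj (lt2 x) (lt2 y) e).
Qed.

Lemma perm_filling : perm_eq [seq filling x | x <- enum (S1 :|: S2)] (iota 1 (4 * n)).
Proof.
apply: uniq_perm; rewrite ?iota_uniq ?map_inj_in_uniq ?enum_uniq //.
  by move=> x y; rewrite !mem_enum; apply: filling_inj.
move=> v; rewrite mem_iota add1n ltnS; apply/mapP/idP => [[x] | v_range].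
  rewrite mem_enum in_setU => /orP[x1 | x2] ->.
    by rewrite filling_S1 // cell_value_range.
  by rewrite filling_S2 // cell_value_range.
have [[] [k lt_k <-]] := cell_value_onto v_range.
  have [x x1 <-] := edge_index_onto L1 n_ge2 lt_k.
  by exists x; rewrite ?mem_enum ?in_setU ?x1 ?filling_S1.
have [x x2 <-] := edge_index_onto L2 n_ge2 lt_k.
by exists x; rewrite ?mem_enum ?in_setU ?x2 ?orbT ?filling_S2.
Qed.

Lemma sum_row_filling i : \sum_(j | (i, j) \in S1 :|: S2) filling (i, j) = 8 * n + 2.
Proof.
rewrite (sum_setU_disjoint (pair i) S12 filling_S1 filling_S2) /f1 /f2.
rewrite !sum_row_edge_index // sum_cell_value_row ?(labeling_lt L1) ?(labeling_lt L2)
  ?(labeling_odd L1) ?(labeling_odd L2) //.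
by rewrite -{1}r1 -r2 (labeling_row_eq L1) (labeling_row_eq L2).
Qed.

Lemma sum_col_filling j : \sum_(i | (i, j) \in S1 :|: S2) filling (i, j) = 8 * n + 2.
Proof.
rewrite (sum_setU_disjoint (fun i => (i, j)) S12 filling_S1 filling_S2) /f1 /f2.
by rewrite !sum_col_edge_index // !sum_cell_value_col ?(labeling_lt L1) ?(labeling_lt L2)
  ?(labeling_odd L1) ?(labeling_odd L2) // addnACA -mulnDl.
Qed.

End Filling.

Unset Implicit Arguments.

Theorem lemma2p1 (n : nat) (S1 S2 : {set 'I_n * 'I_n}) :
  2 <= n ->
  [disjoint S1 & S2] ->
  hamilton_cycle S1 ->
  hamilton_cycle S2 ->
  exists f : 'I_n * 'I_n -> nat,
    [/\ perm_eq [seq f x | x <- enum (S1 :|: S2)] (iota 1 (4 * n)),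
        forall i : 'I_n, \sum_(j : 'I_n | (i, j) \in S1 :|: S2) f (i, j) = 8 * n + 2 &
        forall j : 'I_n, \sum_(i : 'I_n | (i, j) \in S1 :|: S2) f (i, j) = 8 * n + 2].
Proof.
move=> n_ge2 S12 ham1 ham2; have n_gt0 : 0 < n by lia.
pose r := Ordinal n_gt0.
have [s1 L1 r1] := hamilton_cycle_labeling r ham1.
have [s2 L2 r2] := hamilton_cycle_labeling r ham2.
exists (filling S1 s1 s2); split.
- exact: perm_filling.
- exact: sum_row_filling n_ge2 S12 L1 L2 r1 r2.
- exact: sum_col_filling n_ge2 S12 L1 L2.
Qed.
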